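(* Let $x$ be a real number with $x>(1+\sqrt2)/2$ or $x<(1-\sqrt2)/2$. Then $$\sum_{k=0}^\infty\frac{(2(2x-1)^2(2x-3)k-(4x^3-16x^2+7x+6))4^k}{(x(1-x))^k\binom{4k}{2k}}=(1-x)\left(3R(x)+4x(x-3)\right)$$ and $$\sum_{k=0}^\infty\frac{(2(2x-1)^2(2x+1)k-(4x^3+4x^2-13x-1))4^k}{(x(1-x))^k\binom{4k}{2k}}=-x\left(3R(1-x)+4(x-1)(x+2)\right).$$
   Context: For real $y$ with $y>1$ or $y<0$, define $R(y)=\sqrt y\,\operatorname{arctanh}\frac1{\sqrt y}$, i.e. $R(y)=\frac{\sqrt y}2\log\frac{\sqrt y+1}{\sqrt y-1}$ if $y>1$ and $R(y)=\sqrt{|y|}\arctan\frac1{\sqrt{|y|}}$ if $y<0$. *)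

From Stdlib Require Import Reals.
From Coquelicot Require Import Coquelicot.
Open Scope R_scope.

(* R(y) = sqrt y * arctanh(1/sqrt y), for y > 1 or y < 0:
   = (sqrt y / 2) * ln((sqrt y + 1)/(sqrt y - 1))  if y > 1,
   = sqrt|y| * atan(1/sqrt|y|)                      if y < 0.
   (Values for 0 <= y <= 1 are irrelevant junk.) *)
Definition Rfun (y : R) : R :=
  if Rlt_dec 1 y then sqrt y / 2 * ln ((sqrt y + 1) / (sqrt y - 1))
  else sqrt (- y) * atan (1 / sqrt (- y)).

Definition binomR (n k : nat) : R := Binomial.C n k.

(** Wallis' integral gives [1 / binom(4k, 2k) = (4k + 1) 16^-k \int_0^1 (1 - v^2)^(2k) dv],
    so with [t = x (1 - x)] the first series is [\int_0^1 \sum_k p(k) z^k dv], where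
    [z = (1 - v^2)^2 / (4t)] and [p(k) = (A k - B)(4k + 1)] is quadratic ([A k - B] being the
    numerator of the summand).  The hypothesis on [x] is exactly [4t < -1], so [z] stays in
    [[1/(4t), 0]] and the geometric-type sum converges uniformly to [N(z) / (1 - z)^3] with
    [N] quadratic.  This rational integrand is [3(1 - x)] times
    [2x(2x - 1 - v^2) / ((1 - v^2)^2 - 4t)], plus the constant [4x(x - 3)(1 - x)], plus the
    derivative of an explicit rational function; the remaining integrand has a logarithmic
    (for [x > 1]) or arctangent (for [x < 0]) primitive and integrates to [R(x)].  The second
    identity is the first one at [1 - x]. *)

From Stdlib Require Import Reals Lra Lia Psatz.
From Coquelicot Require Import Coquelicot.
Open Scope R_scope.

Lemma is_RInt_lincomb (f g : R -> R) a b If Ig c d :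
  is_RInt f a b If -> is_RInt g a b Ig ->
  is_RInt (fun v => c * f v + d * g v) a b (c * If + d * Ig).
Proof.
  intros Hf Hg.
  exact (is_RInt_plus _ _ _ _ _ _ (is_RInt_scal _ _ _ c _ Hf) (is_RInt_scal _ _ _ d _ Hg)).
Qed.

Lemma is_RInt_ext_R (f g : R -> R) (a b l l' : R) :
  (forall v, Rmin a b < v < Rmax a b -> f v = g v) -> l = l' ->
  is_RInt f a b l -> is_RInt g a b l'.
Proof. intros Hfg <- Hf. exact (is_RInt_ext f g a b l Hfg Hf). Qed.

Lemma is_RInt_pow_one_minus_sq_S n I :
  is_RInt (fun v => (1 - v^2)^n) 0 1 I ->
  is_RInt (fun v => (1 - v^2)^(S n)) 0 1 ((2 * INR n + 2) / (2 * INR n + 3) * I).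
Proof.
  intros HI.
  assert (Hparts : is_RInt (fun v => (2 * INR n + 3) * (1 - v^2)^(S n)
                                   - (2 * INR n + 2) * (1 - v^2)^n) 0 1 0).
  { replace 0 with (minus (1 * (1 - 1^2)^(S n)) (0 * (1 - 0^2)^(S n))) at 2
      by (unfold minus, plus, opp; simpl; ring).
    apply (is_RInt_derive (fun v => v * (1 - v^2)^(S n))).
    - intros v _. auto_derive; [easy|].
      change (match n with 0%nat => 1 | S _ => INR n + 1 end) with (INR (S n)).
      match goal with |- ?a = ?b => change (a = b :> R) end.
      rewrite S_INR. simpl. unfold Rminus. ring.
    - intros v _. apply (@ex_derive_continuous R_AbsRing R_NormedModule).
      auto_derive. easy. }
  assert (Hn : 0 < 2 * INR n + 3) by (pose proof (pos_INR n); lra).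
  pose proof (is_RInt_lincomb _ _ _ _ _ _ (/ (2 * INR n + 3)) ((2 * INR n + 2) / (2 * INR n + 3))
                Hparts HI) as H.
  revert H. apply is_RInt_ext_R; [intros v _; simpl; field; lra | ring].
Qed.

Lemma is_RInt_pow_one_minus_sq n :
  is_RInt (fun v => (1 - v^2)^n) 0 1
    (4^n * INR (Factorial.fact n)^2 / INR (Factorial.fact (2*n+1))).
Proof.
  induction n as [|n IH].
  - apply (is_RInt_ext_R (fun _ => 1) _ _ _ (scal (1 - 0) 1)).
    + intros; simpl; ring.
    + unfold scal; simpl; unfold mult; simpl; field.
    + apply (is_RInt_const 0 1 1).
  - apply is_RInt_pow_one_minus_sq_S in IH. revert IH.
    apply is_RInt_ext_R; [easy|].
    replace (2 * S n + 1)%nat with (S (S (2 * n + 1))) by lia.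
    rewrite !fact_simpl, !mult_INR, !S_INR, plus_INR, mult_INR. simpl INR.
    pose proof (INR_fact_neq_0 (2 * n + 1)). pose proof (pos_INR n).
    simpl pow. field. repeat split; try lra; auto.
Qed.

Lemma binomR_central k :
  binomR (4*k) (2*k) = INR (Factorial.fact (4*k)) / INR (Factorial.fact (2*k))^2.
Proof.
  unfold binomR, Binomial.C. replace (4*k - 2*k)%nat with (2*k)%nat by lia.
  simpl. field. apply INR_fact_neq_0.
Qed.

Lemma binomR_central_pos k : 0 < binomR (4*k) (2*k).
Proof.
  rewrite binomR_central. apply Rdiv_lt_0_compat; [apply INR_fact_lt_0|].
  apply pow_lt, INR_fact_lt_0.
Qed.

Lemma is_RInt_inv_binomR_central k :
  is_RInt (fun v => (1 - v^2)^(2*k)) 0 1 (16^k / ((4 * INR k + 1) * binomR (4*k) (2*k))).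
Proof.
  generalize (is_RInt_pow_one_minus_sq (2*k)). apply is_RInt_ext_R; [easy|].
  rewrite binomR_central, pow_mult.
  replace (2 * (2 * k) + 1)%nat with (S (4 * k)) by lia.
  rewrite fact_simpl, mult_INR, S_INR, mult_INR. simpl INR.
  pose proof (INR_fact_neq_0 (4 * k)). pose proof (INR_fact_neq_0 (2 * k)). pose proof (pos_INR k).
  replace (4^2) with 16 by ring. field. repeat split; try lra; auto.
Qed.

Lemma Rabs_mult_le_l b w : Rabs w <= 1 -> Rabs (b * w) <= Rabs b.
Proof.
  intros Hw. rewrite Rabs_mult. pose proof (Rabs_pos b). pose proof (Rabs_pos w). nra.
Qed.

Section QuadraticGeometricSum.

Variable p : R -> R.

Definition geom_numer (m z : R) : R :=
  p m + (p (m + 1) - 3 * p m) * z + (p (m + 2) - 3 * p (m + 1) + 3 * p m) * z^2.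

Hypothesis p_diff3 : forall m, p (m + 3) - 3 * p (m + 2) + 3 * p (m + 1) - p m = 0.

Lemma geom_numer_shift m z : geom_numer m z = (1 - z)^3 * p m + z * geom_numer (m + 1) z.
Proof.
  unfold geom_numer.
  replace (m + 1 + 1) with (m + 2) by ring. replace (m + 1 + 2) with (m + 3) by ring.
  replace (p (m + 3)) with (3 * p (m + 2) - 3 * p (m + 1) + p m) by (pose proof (p_diff3 m); lra).
  ring.
Qed.

Lemma sum_n_pow_geom_numer n z :
  (1 - z)^3 * sum_n (fun k => p (INR k) * z^k) n
  = geom_numer 0 z - z^(S n) * geom_numer (INR (S n)) z.
Proof.
  induction n as [|n IH].
  - rewrite sum_O, (geom_numer_shift 0 z).
    replace (0 + 1) with (INR 1) by (simpl; ring). simpl. ring.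
  - rewrite sum_Sn. change (plus ?a ?b) with (a + b).
    rewrite Rmult_plus_distr_l, IH, (S_INR (S n)).
    rewrite (geom_numer_shift (INR (S n)) z). simpl pow. ring.
Qed.

Variable C : R.
Hypothesis p_growth : forall m, 0 <= m -> Rabs (p m) <= C * (m + 1)^2.

Lemma geom_numer_bound m z : 0 <= m -> Rabs z <= 1 ->
  Rabs (geom_numer m z) <= 32 * C * (m + 1)^2.
Proof.
  intros Hm Hz.
  pose proof (p_growth m Hm) as H0.
  pose proof (p_growth (m + 1) ltac:(lra)) as H1.
  pose proof (p_growth (m + 2) ltac:(lra)) as H2.
  assert (Hz2 : Rabs (z^2) <= 1) by (rewrite <- RPow_abs; pose proof (Rabs_pos z); nra).
  unfold geom_numer.
  set (a0 := p m) in *. set (a1 := p (m + 1)) in *. set (a2 := p (m + 2)) in *.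
  assert (Hb : Rabs ((a1 - 3 * a0) * z) <= Rabs a1 + 3 * Rabs a0).
  { eapply Rle_trans; [now apply Rabs_mult_le_l|].
    unfold Rminus. eapply Rle_trans; [apply Rabs_triang|].
    rewrite Rabs_Ropp, Rabs_mult, (Rabs_pos_eq 3) by lra. lra. }
  assert (Hc : Rabs ((a2 - 3 * a1 + 3 * a0) * z^2) <= Rabs a2 + 3 * Rabs a1 + 3 * Rabs a0).
  { eapply Rle_trans; [now apply Rabs_mult_le_l|].
    eapply Rle_trans; [apply Rabs_triang|]. unfold Rminus.
    eapply Rle_trans; [apply Rplus_le_compat_r, Rabs_triang|].
    rewrite Rabs_Ropp, !Rabs_mult, (Rabs_pos_eq 3) by lra. lra. }
  pose proof (Rabs_triang (a0 + (a1 - 3 * a0) * z) ((a2 - 3 * a1 + 3 * a0) * z^2)).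
  pose proof (Rabs_triang a0 ((a1 - 3 * a0) * z)).
  assert (HC : 0 <= C) by (pose proof (Rabs_pos a0); nra).
  nra.
Qed.

Lemma sum_n_pow_remainder_bound rho n z : rho <= 1 -> -rho <= z <= 0 ->
  Rabs (geom_numer 0 z / (1 - z)^3 - sum_n (fun k => p (INR k) * z^k) n)
  <= 32 * C * (INR n + 2)^2 * rho^(S n).
Proof.
  intros Hrho Hz.
  assert (Hd : 1 <= (1 - z)^3) by (rewrite <- (pow1 3); apply pow_incr; lra).
  assert (Hrem : geom_numer 0 z / (1 - z)^3 - sum_n (fun k => p (INR k) * z^k) n
                 = z^(S n) * geom_numer (INR (S n)) z / (1 - z)^3).
  { replace (sum_n (fun k => p (INR k) * z^k) n)
      with ((geom_numer 0 z - z^(S n) * geom_numer (INR (S n)) z) / (1 - z)^3)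
      by (rewrite <- sum_n_pow_geom_numer; field; lra).
    field. lra. }
  assert (Hzn : Rabs (z^(S n)) <= rho^(S n)).
  { rewrite <- RPow_abs. apply pow_incr. split; [apply Rabs_pos|].
    rewrite Rabs_left1; lra. }
  assert (HM : Rabs (geom_numer (INR (S n)) z) <= 32 * C * (INR n + 2)^2).
  { replace (INR n + 2) with (INR (S n) + 1) by (rewrite S_INR; ring).
    apply geom_numer_bound; [apply pos_INR | apply Rabs_le; lra]. }
  rewrite Hrem. unfold Rdiv. rewrite !Rabs_mult, Rabs_inv, (Rabs_pos_eq ((1 - z)^3)) by lra.
  assert (Hinv : 0 < / (1 - z)^3 <= 1).
  { split; [apply Rinv_0_lt_compat; lra|]. rewrite <- Rinv_1. apply Rinv_le_contravar; lra. }
  pose proof (Rabs_pos (z^(S n))). pose proof (Rabs_pos (geom_numer (INR (S n)) z)).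
  assert (Hprod : Rabs (z^(S n)) * Rabs (geom_numer (INR (S n)) z)
                  <= rho^(S n) * (32 * C * (INR n + 2)^2))
    by (apply Rmult_le_compat; lra).
  assert (0 <= Rabs (z^(S n)) * Rabs (geom_numer (INR (S n)) z)) by (apply Rmult_le_pos; lra).
  apply Rle_trans with (Rabs (z^(S n)) * Rabs (geom_numer (INR (S n)) z)); [nra | lra].
Qed.

End QuadraticGeometricSum.

Lemma is_lim_seq_sq_mul_pow r : 0 <= r < 1 ->
  is_lim_seq (fun n => (INR n + 2)^2 * r^(S n)) 0.
Proof.
  intros Hr.
  set (a := PS_derive (PS_derive (fun _ : nat => 1))).
  assert (Hrad : CV_radius a = 1).
  { unfold a. rewrite !CV_radius_derive.
    rewrite (CV_radius_finite_DAlembert _ 1); [f_equal; apply Rinv_1 | intros; lra | lra |].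
    apply (is_lim_seq_ext (fun _ => 1)); [intros; rewrite Rdiv_1_r, Rabs_R1; easy |].
    apply is_lim_seq_const. }
  assert (Hterm : is_lim_seq (fun n => a n * r^n) 0).
  { apply ex_series_lim_0, ex_series_Rabs, CV_disk_inside.
    rewrite Hrad, Rabs_pos_eq by lra. simpl. lra. }
  apply is_lim_seq_le_le with (u := fun _ => 0) (w := fun n => 2 * r * (a n * r^n)).
  - intros n. unfold a, PS_derive. rewrite !S_INR. simpl pow.
    pose proof (pos_INR n). pose proof (pow_le r n (proj1 Hr)).
    assert (0 <= r * r^n) by (apply Rmult_le_pos; lra).
    split; [apply Rmult_le_pos; nra |].
    replace (2 * r * ((INR n + 1) * ((INR n + 1 + 1) * 1) * r^n))
      with (2 * ((INR n + 1) * (INR n + 2)) * (r * r^n)) by ring.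
    apply Rmult_le_compat_r; nra.
  - apply is_lim_seq_const.
  - replace (Finite 0) with (Rbar_mult (2 * r) 0) by (simpl; f_equal; ring).
    now apply is_lim_seq_scal_l.
Qed.

Lemma is_RInt_sum_n (f : nat -> R -> R) (a : nat -> R) lo hi :
  (forall k, is_RInt (f k) lo hi (a k)) ->
  forall n, is_RInt (fun v => sum_n (fun k => f k v) n) lo hi (sum_n a n).
Proof.
  intros Hf n. induction n as [|n IH].
  - rewrite sum_O. apply (is_RInt_ext (f 0%nat)); [intros; now rewrite sum_O | apply Hf].
  - rewrite sum_Sn. apply (is_RInt_ext (fun v => plus (sum_n (fun k => f k v) n) (f (S n) v))).
    + intros; now rewrite sum_Sn.
    + exact (is_RInt_plus _ _ _ _ _ _ IH (Hf (S n))).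
Qed.

Lemma is_series_of_RInt_approx (f : nat -> R -> R) (a : nat -> R) (F : R -> R)
  (lo hi L : R) (e : nat -> R) :
  lo <= hi ->
  (forall k, is_RInt (f k) lo hi (a k)) -> is_RInt F lo hi L ->
  (forall n v, lo <= v <= hi -> Rabs (F v - sum_n (fun k => f k v) n) <= e n) ->
  is_lim_seq e 0 -> is_series a L.
Proof.
  intros Hlohi Hf HF Happrox He.
  assert (Hgap : forall n, Rabs (L - sum_n a n) <= (hi - lo) * e n).
  { intros n.
    pose proof (is_RInt_minus _ _ _ _ _ _ HF (is_RInt_sum_n f a lo hi Hf n)) as H.
    rewrite <- (Rabs_pos_eq (hi - lo)) by lra.
    refine (norm_RInt_le_const_abs _ _ _ _ _ _ H). intros v Hv.
    rewrite Rmin_left, Rmax_right in Hv by lra. now apply Happrox. }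
  assert (Hlim : is_lim_seq (fun n => L - sum_n a n) 0).
  { apply is_lim_seq_abs_0.
    apply is_lim_seq_le_le with (u := fun _ => 0) (w := fun n => (hi - lo) * e n).
    - intros n. split; [apply Rabs_pos | apply Hgap].
    - apply is_lim_seq_const.
    - replace (Finite 0) with (Rbar_mult (hi - lo) 0) by (simpl; f_equal; ring).
      now apply is_lim_seq_scal_l. }
  pose proof (is_lim_seq_minus' _ _ _ _ (is_lim_seq_const L) Hlim) as H.
  rewrite Rminus_0_r in H.
  revert H. apply is_lim_seq_ext. intros n.
  change (L - (L - sum_n a n) = sum_n a n :> R). ring.
Qed.

Definition R_integrand (x v : R) : R :=
  2 * x * (2 * x - 1 - v^2) / ((1 - v^2)^2 - 4 * (x * (1 - x))).

Lemma is_RInt_R_integrand_gt1 x : 1 < x -> is_RInt (R_integrand x) 0 1 (Rfun x).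
Proof.
  intros Hx.
  set (r := sqrt x).
  assert (Hr1 : 1 < r) by (unfold r; rewrite <- sqrt_1; apply sqrt_lt_1; lra).
  assert (Hxr : x = r * r) by (unfold r; rewrite sqrt_sqrt; lra).
  unfold Rfun. destruct (Rlt_dec 1 x) as [_|]; [|lra]. fold r.
  assert (Hp : forall v, 0 < v^2 + 2*r*v + 2*r*r - 1)
    by (intros v; pose proof (pow2_ge_0 (v + r)); nra).
  assert (Hm : forall v, 0 < v^2 - 2*r*v + 2*r*r - 1)
    by (intros v; pose proof (pow2_ge_0 (v - r)); nra).
  set (G v := r / 2 * (ln (v^2 + 2*r*v + 2*r*r - 1) - ln (v^2 - 2*r*v + 2*r*r - 1))).
  apply (is_RInt_ext_R (R_integrand x) _ _ _ (minus (G 1) (G 0))); [easy | |].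
  - unfold G, minus, plus, opp; simpl.
    assert (H1 : 0 < 2 * r * r - 1) by nra.
    rewrite <- !ln_div by (specialize (Hp 1); specialize (Hm 1); simpl in *; lra).
    replace ((1 * (1 * 1) + 2 * r * 1 + 2 * r * r - 1) / (1 * (1 * 1) - 2 * r * 1 + 2 * r * r - 1))
      with ((r + 1) / (r - 1)) by (field; split; nra).
    replace ((0 * (0 * 1) + 2 * r * 0 + 2 * r * r - 1) / (0 * (0 * 1) - 2 * r * 0 + 2 * r * r - 1))
      with 1 by (field; lra).
    rewrite ln_1. ring.
  - apply (is_RInt_derive G).
    + intros v _. unfold G. auto_derive.
      * split; [apply Hp|split; [apply Hm|auto]].
      * unfold R_integrand. rewrite Hxr. specialize (Hp v). specialize (Hm v). field.
        split; try lra. nra.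
    + intros v _. apply (@ex_derive_continuous R_AbsRing R_NormedModule). unfold R_integrand.
      auto_derive. apply Rgt_not_eq. rewrite Hxr. pose proof (pow2_ge_0 (1 + - (v * (v * 1)))). nra.
Qed.

Lemma is_RInt_R_integrand_neg x : x < 0 -> is_RInt (R_integrand x) 0 1 (Rfun x).
Proof.
  intros Hx.
  set (r := sqrt (-x)).
  assert (Hr : 0 < r) by (unfold r; apply sqrt_lt_R0; lra).
  assert (Hxr : x = - (r * r)) by (unfold r; rewrite sqrt_sqrt; lra).
  unfold Rfun. destruct (Rlt_dec 1 x) as [|_]; [lra|]. fold r.
  set (G v := r * atan (2 * r * v / (1 + 2 * r * r - v^2))).
  apply (is_RInt_ext_R (R_integrand x) _ _ _ (minus (G 1) (G 0))); [easy | |].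
  - unfold G, minus, plus, opp; simpl.
    replace (2 * r * 0 / (1 + 2 * r * r - 0 * (0 * 1))) with 0 by (field; nra).
    replace (2 * r * 1 / (1 + 2 * r * r - 1 * (1 * 1))) with (1 / r) by (field; lra).
    rewrite atan_0. ring.
  - apply (is_RInt_derive G).
    + intros v Hv. rewrite Rmin_left, Rmax_right in Hv by lra. unfold G.
      auto_derive.
      * apply Rgt_not_eq. nra.
      * unfold R_integrand. rewrite Hxr. field.
        split; apply Rgt_not_eq; [pose proof (pow2_ge_0 (1 - v^2)); nra | nra].
    + intros v _. apply (@ex_derive_continuous R_AbsRing R_NormedModule). unfold R_integrand.
      auto_derive. apply Rgt_not_eq. rewrite Hxr. pose proof (pow2_ge_0 (1 + - (v * (v * 1)))). nra.
Qed.

Lemma is_RInt_R_integrand x : x * (1 - x) < 0 -> is_RInt (R_integrand x) 0 1 (Rfun x).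
Proof.
  intros Hx. destruct (Rlt_or_le 1 x) as [H1 | H1].
  - now apply is_RInt_R_integrand_gt1.
  - apply is_RInt_R_integrand_neg. destruct (Rle_or_lt x 0); nra.
Qed.

Definition term_poly (x m : R) : R :=
  (2 * (2 * x - 1) ^ 2 * (2 * x - 3) * m - (4 * x ^ 3 - 16 * x ^ 2 + 7 * x + 6)) * (4 * m + 1).

Definition zeta (x v : R) : R := (1 - v^2)^2 / (4 * (x * (1 - x))).

Lemma term_poly_diff3 x m :
  term_poly x (m + 3) - 3 * term_poly x (m + 2) + 3 * term_poly x (m + 1) - term_poly x m = 0.
Proof. unfold term_poly. ring. Qed.

Lemma Rabs_affine_mul_le a b m : 0 <= m ->
  Rabs ((a * m - b) * (4 * m + 1)) <= 4 * (Rabs a + Rabs b) * (m + 1)^2.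
Proof.
  intros Hm. rewrite Rabs_mult, (Rabs_pos_eq (4 * m + 1)) by lra.
  assert (H : Rabs (a * m - b) <= (Rabs a + Rabs b) * (m + 1)).
  { unfold Rminus. eapply Rle_trans; [apply Rabs_triang|].
    rewrite Rabs_Ropp, Rabs_mult, (Rabs_pos_eq m) by lra.
    pose proof (Rabs_pos a). pose proof (Rabs_pos b). nra. }
  pose proof (Rabs_pos (a * m - b)). nra.
Qed.

Definition geom_primitive (x v : R) : R :=
  v * ((18*x + 98*x^2 - 348*x^3 + 344*x^4 - 112*x^5)
       + (-66*x - 86*x^2 + 480*x^3 - 488*x^4 + 160*x^5) * v^2
       + (90*x - 66*x^2 - 120*x^3 + 144*x^4 - 48*x^5) * v^4
       + (-54*x + 70*x^2 - 16*x^3) * v^6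
       + (12*x - 16*x^2 + 4*x^3) * v^8)
  / (4 * (x * (1 - x)) - (1 - v^2)^2)^2.

Lemma zeta_nonpos x v : x * (1 - x) < 0 -> zeta x v <= 0.
Proof.
  intros Hx. unfold zeta, Rdiv. pose proof (pow2_ge_0 (1 - v^2)).
  assert (/ (4 * (x * (1 - x))) < 0) by (apply Rinv_lt_0_compat; lra). nra.
Qed.

Lemma is_derive_geom_primitive x v : x * (1 - x) < 0 ->
  is_derive (geom_primitive x) v
    (geom_numer (term_poly x) 0 (zeta x v) / (1 - zeta x v)^3
     - 3 * (1 - x) * R_integrand x v - 4 * x * (x - 3) * (1 - x)).
Proof.
  intros Hx. pose proof (zeta_nonpos x v Hx) as Hz. revert Hz.
  unfold geom_primitive, geom_numer, zeta, R_integrand, term_poly.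
  intros Hz. pose proof (pow2_ge_0 (1 - v^2)).
  auto_derive.
  - pose proof (pow2_ge_0 (1 + - (v * (v * 1)))).
    apply Rmult_integral_contrapositive_currified; [apply Rlt_not_eq; nra|].
    apply Rmult_integral_contrapositive_currified; [apply Rlt_not_eq; nra|lra].
  - field. repeat split; intro; nra.
Qed.

Lemma is_RInt_geom_integrand x : x * (1 - x) < 0 ->
  is_RInt (fun v => geom_numer (term_poly x) 0 (zeta x v) / (1 - zeta x v)^3) 0 1
    ((1 - x) * (3 * Rfun x + 4 * x * (x - 3))).
Proof.
  intros Hx.
  set (Phi v := geom_numer (term_poly x) 0 (zeta x v) / (1 - zeta x v)^3).
  set (c := 4 * x * (x - 3) * (1 - x)).
  assert (Hrest : is_RInt (fun v => Phi v - 3 * (1 - x) * R_integrand x v - c) 0 1 0).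
  { apply (is_RInt_ext_R (fun v => Phi v - 3 * (1 - x) * R_integrand x v - c) _ _ _
             (minus (geom_primitive x 1) (geom_primitive x 0))); [easy | |].
    - unfold geom_primitive, minus, plus, opp; simpl. field. nra.
    - apply (is_RInt_derive (geom_primitive x)).
      + intros v _. now apply is_derive_geom_primitive.
      + intros v _. apply (@ex_derive_continuous R_AbsRing R_NormedModule).
        unfold Phi, geom_numer, zeta, R_integrand, term_poly.
        pose proof (pow2_ge_0 (1 + - (v * (v * 1)))).
        assert (Hi : / (4 * (x * (1 - x))) < 0) by (apply Rinv_lt_0_compat; lra).
        assert (0 < 1 + - ((1 + - (v * (v * 1))) * ((1 + - (v * (v * 1))) * 1)
                          * / (4 * (x * (1 - x))))) by nra.
        auto_derive. split; [|split; [|easy]]; apply Rgt_not_eq.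
        * repeat apply Rmult_lt_0_compat; lra.
        * nra. }
  pose proof (is_RInt_lincomb _ _ _ _ _ _ 1 (3 * (1 - x)) Hrest (is_RInt_R_integrand x Hx)) as H.
  pose proof (is_RInt_lincomb _ _ _ _ _ _ 1 c H (is_RInt_const 0 1 1)) as H'.
  revert H'. apply is_RInt_ext_R.
  - intros v _. ring.
  - unfold c, scal; simpl; unfold mult; simpl. ring.
Qed.

Lemma is_RInt_term_poly_zeta_pow x k : x * (1 - x) <> 0 ->
  is_RInt (fun v => term_poly x (INR k) * zeta x v ^ k) 0 1
    ((2 * (2 * x - 1) ^ 2 * (2 * x - 3) * INR k - (4 * x ^ 3 - 16 * x ^ 2 + 7 * x + 6)) * 4 ^ k
     / ((x * (1 - x)) ^ k * binomR (4 * k) (2 * k))).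
Proof.
  intros Hx.
  pose proof (is_RInt_scal _ _ _ (term_poly x (INR k) / (4 * (x * (1 - x)))^k) _
                (is_RInt_inv_binomR_central k)) as H.
  revert H. apply is_RInt_ext_R; change (scal ?a ?b) with (a * b).
  - intros v _. unfold zeta, Rdiv.
    rewrite pow_mult, (Rpow_mult_distr ((1 - v^2)^2)), pow_inv. ring.
  - pose proof (binomR_central_pos k). pose proof (pos_INR k).
    assert (4 ^ k <> 0) by (apply pow_nonzero; lra).
    assert ((x * (1 - x)) ^ k <> 0) by (apply pow_nonzero; auto).
    unfold term_poly. replace 16 with (4 * 4) by ring.
    rewrite (Rpow_mult_distr 4 4), (Rpow_mult_distr 4 (x * (1 - x))).
    field. repeat split; auto; lra.
Qed.

Lemma is_series_inv_central_binom x : 4 * (x * (1 - x)) < -1 ->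
  is_series (fun k : nat =>
      (2 * (2 * x - 1) ^ 2 * (2 * x - 3) * INR k
         - (4 * x ^ 3 - 16 * x ^ 2 + 7 * x + 6)) * 4 ^ k
      / ((x * (1 - x)) ^ k * binomR (4 * k) (2 * k)))
    ((1 - x) * (3 * Rfun x + 4 * x * (x - 3))).
Proof.
  intros Hx.
  set (C := 4 * (Rabs (2 * (2 * x - 1) ^ 2 * (2 * x - 3))
                 + Rabs (4 * x ^ 3 - 16 * x ^ 2 + 7 * x + 6))).
  set (rho := -1 / (4 * (x * (1 - x)))).
  assert (Hrho : 0 <= rho < 1).
  { unfold rho. set (T := 4 * (x * (1 - x))) in *.
    assert (Hrho_inv : -1 / T * (- T) = 1) by (field; lra).
    split; nra. }
  assert (Hzeta : forall v, 0 <= v <= 1 -> -rho <= zeta x v <= 0).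
  { intros v Hv. split; [|apply zeta_nonpos; lra].
    replace (zeta x v) with (- (1 - v^2)^2 * rho) by (unfold zeta, rho; field; nra).
    assert (0 <= 1 - v^2 <= 1) by nra.
    assert ((1 - v^2)^2 <= 1) by nra. nra. }
  apply (is_series_of_RInt_approx (fun k v => term_poly x (INR k) * zeta x v ^ k) _
           (fun v => geom_numer (term_poly x) 0 (zeta x v) / (1 - zeta x v)^3) 0 1 _
           (fun n => 32 * C * (INR n + 2)^2 * rho^(S n))).
  - lra.
  - intros k. apply is_RInt_term_poly_zeta_pow. nra.
  - apply is_RInt_geom_integrand. lra.
  - intros n v Hv.
    apply sum_n_pow_remainder_bound; [apply term_poly_diff3 | | lra | now apply Hzeta].
    intros m Hm. apply Rabs_affine_mul_le, Hm.
  - apply (is_lim_seq_ext (fun n => (32 * C) * ((INR n + 2)^2 * rho^(S n)))); [intros; ring|].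
    replace (Finite 0) with (Rbar_mult (32 * C) 0) by (simpl; f_equal; ring).
    now apply is_lim_seq_scal_l, is_lim_seq_sq_mul_pow.
Qed.

Lemma is_series_inv_central_binom_swap x : 4 * (x * (1 - x)) < -1 ->
  is_series (fun k : nat =>
      (2 * (2 * x - 1) ^ 2 * (2 * x + 1) * INR k
         - (4 * x ^ 3 + 4 * x ^ 2 - 13 * x - 1)) * 4 ^ k
      / ((x * (1 - x)) ^ k * binomR (4 * k) (2 * k)))
    (- x * (3 * Rfun (1 - x) + 4 * (x - 1) * (x + 2))).
Proof.
  intros Hx.
  replace (x * (1 - x)) with ((1 - x) * (1 - (1 - x))) in * by ring.
  pose proof (is_series_opp _ _ (is_series_inv_central_binom (1 - x) Hx)) as H.
  replace (- x * (3 * Rfun (1 - x) + 4 * (x - 1) * (x + 2)))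
    with (opp ((1 - (1 - x)) * (3 * Rfun (1 - x) + 4 * (1 - x) * (1 - x - 3))))
    by (unfold opp; simpl; ring).
  revert H. apply is_series_ext. intros k. unfold opp; simpl. unfold Rdiv. ring.
Qed.

Theorem theorem1p3 (x : R)
  (hx : x > (1 + sqrt 2) / 2 \/ x < (1 - sqrt 2) / 2) :
  is_series (fun k : nat =>
      (2 * (2 * x - 1) ^ 2 * (2 * x - 3) * INR k
         - (4 * x ^ 3 - 16 * x ^ 2 + 7 * x + 6)) * 4 ^ k
      / ((x * (1 - x)) ^ k * binomR (4 * k) (2 * k)))
    ((1 - x) * (3 * Rfun x + 4 * x * (x - 3)))
  /\
  is_series (fun k : nat =>
      (2 * (2 * x - 1) ^ 2 * (2 * x + 1) * INR k
         - (4 * x ^ 3 + 4 * x ^ 2 - 13 * x - 1)) * 4 ^ k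
      / ((x * (1 - x)) ^ k * binomR (4 * k) (2 * k)))
    (- x * (3 * Rfun (1 - x) + 4 * (x - 1) * (x + 2))).
Proof.
  assert (Hsqrt2 : sqrt 2 * sqrt 2 = 2) by (apply sqrt_sqrt; lra).
  pose proof (sqrt_pos 2).
  assert (Hx : 4 * (x * (1 - x)) < -1) by (destruct hx; nra).
  split; [apply is_series_inv_central_binom | apply is_series_inv_central_binom_swap]; exact Hx.
Qed.
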